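(* Let $R$ be a Galois ring of odd characteristic. Then every pure subgroup $K\le R^\times$ is strongly pure.
   Context: All rings have an identity. A finite local commutative ring $R$ with maximal ideal $\mathrm{rad}(R)$ and residue field of characteristic $p$ is a Galois ring if $\mathrm{rad}(R)=pR$. $K\le R^\times$ is pure if the only ideal $I$ of $R$ with $1+I\subseteq K$ is $\{0\}$. With $I_0=\{x\in\mathrm{rad}(R):x\,\mathrm{rad}(R)=\{0\}\}$ and $\pi_0:R\to R/I_0$ the natural epimorphism, $K$ is strongly pure if it is pure and, unless $R$ is a field, $\pi_0(K)$ is a strongly pure subgroup of $(R/I_0)^\times$ (recursive definition). *)

From HB Require Import structures.
From mathcomp Require Import all_boot all_order all_algebra.
Set Implicit Arguments. Unset Strict Implicit. Unset Printing Implicit Defensive.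
Import GRing.Theory.
Local Open Scope ring_scope.

(* Finite commutative rings with identity are modelled by finComUnitRingType
   (the units/inverse are computable, as always for finite rings). *)

Section RingNotions.
Variable R : finComUnitRingType.

Definition is_ideal (I : {set R}) : bool :=
  [&& 0 \in I,
      [forall x in I, forall y in I, x - y \in I] &
      [forall r, forall x in I, r * x \in I]].

Definition is_maximal_ideal (M : {set R}) : bool :=
  [&& is_ideal M, 1 \notin M &
      [forall J : {set R}, [&& is_ideal J, 1 \notin J & M \subset J] ==> (J == M)]].

Definition is_local_ring : Prop :=
  exists M, is_maximal_ideal M /\ forall M', is_maximal_ideal M' -> M' = M.

Definition rad : {set R} :=
  [set x | [forall M : {set R}, is_maximal_ideal M ==> (x \in M)]].

Definition has_char (c : nat) : Prop :=
  [/\ (0 < c)%N, c%:R = 0 :> R &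
      forall m, (0 < m)%N -> m%:R = 0 :> R -> (c <= m)%N].

(* R is a Galois ring: finite local, with rad(R) = pR where p is the
   characteristic of the residue field R/rad(R) (i.e. p prime with p%:R in rad R) *)
Definition is_galois_ring : Prop :=
  is_local_ring /\
  exists p, [/\ prime p, p%:R \in rad & rad = [set p%:R * x | x in R]].

Definition is_field : Prop := forall x : R, x != 0 -> x \is a GRing.unit.

Definition is_unit_subgroup (K : {set R}) : Prop :=
  [/\ K \subset [set x | x \is a GRing.unit], 1 \in K,
      (forall x y, x \in K -> y \in K -> x * y \in K) &
      (forall x, x \in K -> x^-1 \in K)].

Definition pure (K : {set R}) : Prop :=
  forall I, is_ideal I -> [set 1 + x | x in I] \subset K -> I = [set 0].

Definition I0 : {set R} :=
  [set x in rad | [forall y in rad, x * y == 0]].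

End RingNotions.

(* The quotient R/I_0 is represented, up to isomorphism, by any finite ring S
   with a surjective ring morphism pi_0 : R -> S whose kernel is I_0. *)
Inductive strongly_pure : forall R : finComUnitRingType, {set R} -> Prop :=
| StronglyPure (R : finComUnitRingType) (K : {set R}) :
    pure K ->
    (is_field R \/
     forall (S : finComUnitRingType) (pi0 : {rmorphism R -> S}),
       (forall s : S, exists r : R, pi0 r = s) ->
       (forall r : R, pi0 r = 0 <-> r \in I0 R) ->
       strongly_pure (pi0 @: K)) ->
    strongly_pure K.

From Pilot Require Import Defs.
From mathcomp Require Import all_boot all_order all_algebra.
From mathcomp Require Import ring.
Set Implicit Arguments. Unset Strict Implicit. Unset Printing Implicit Defensive.
Import GRing.Theory.
Local Open Scope ring_scope.

(* In a Galois ring of odd characteristic the maximal ideal is pR for an odd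
   prime p, so every element is a unit or a multiple of p.  This property
   passes to R/I_0, where I_0 = {x in pR | px = 0}, and R/I_0 is smaller than
   R unless p = 0 (and then R is a field), so strong purity follows by
   induction on |R| once pi_0(K) is shown to be pure.  Let p^(m+2) be the
   least vanishing power of p.  A nonzero ideal J of R/I_0 contains the image
   of p^m R.  If 1 + J lies in pi_0(K), then for m = 0 the element 0 lies in
   pi_0(K), which is absurd; for m > 0 every 1 + p^m x + p e with p^2 e = 0
   lies in K, and raising it to the p-th power gives 1 + p^(m+1) x, because
   p divides binomial(p, 2) for odd p.  So 1 + p^(m+1) R lies in K, against
   the purity of K. *)

Section Ideals.
Variable R : finComUnitRingType.
Implicit Types (a b x : R) (I : {set R}).

Lemma idealP I : reflect
  [/\ 0 \in I, forall x y, x \in I -> y \in I -> x - y \in I &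
      forall r x, x \in I -> r * x \in I] (is_ideal I).
Proof.
apply: (iffP and3P) => [[I0 /forall_inP IB /forallP IM]|[I0 IB IM]]; split => //.
- by move=> x y xI yI; move/forall_inP: (IB x xI); apply.
- by move=> r x xI; move/forall_inP: (IM r); apply.
- by apply/forall_inP => x xI; apply/forall_inP => y yI; apply: IB.
- by apply/forallP => r; apply/forall_inP => x xI; apply: IM.
Qed.

Lemma ideal_proper_nonunit I x :
  is_ideal I -> 1 \notin I -> x \in I -> x \isn't a GRing.unit.
Proof.
move=> /idealP[_ _ IM] n1I xI; apply: contra n1I => xu.
by rewrite -(mulVr xu); apply: IM.
Qed.

Lemma exists_maximal_ideal I :
  is_ideal I -> 1 \notin I -> exists2 M, is_maximal_ideal M & I \subset M.
Proof.
move=> iI n1I; pose P (J : {set R}) := is_ideal J && (1 \notin J).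
have PI : P I by apply/andP.
have [M /maxsetP[/andP[iM n1M] maxM] sIM] := maxset_exists PI.
exists M => //; apply/and3P; split => //.
apply/forallP => J; apply/implyP => /and3P[iJ n1J sMJ].
by apply/eqP; apply: maxM => //; apply/andP.
Qed.

Definition principal_ideal a : {set R} := [set a * x | x in R].

Lemma principal_ideal_is_ideal a : is_ideal (principal_ideal a).
Proof.
apply/idealP; split.
- by apply/imsetP; exists 0; rewrite ?mulr0.
- move=> _ _ /imsetP[x _ ->] /imsetP[y _ ->]; apply/imsetP; exists (x - y) => //.
  by rewrite mulrBr.
- move=> r _ /imsetP[x _ ->]; apply/imsetP; exists (r * x) => //.
  by rewrite mulrCA.
Qed.

Lemma principal_ideal_id a : a \in principal_ideal a.
Proof. by apply/imsetP; exists 1; rewrite ?mulr1. Qed.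

Lemma one_in_principal_ideal a : (1 \in principal_ideal a) = (a \is a GRing.unit).
Proof.
by apply/imsetP/unitrPr => [[y _ ay]|[y ay]]; exists y.
Qed.

Lemma local_nonunit_rad x :
  is_local_ring R -> x \isn't a GRing.unit -> x \in Defs.rad R.
Proof.
move=> [M [_ uniqM]] xn.
have n1x : 1 \notin principal_ideal x by rewrite one_in_principal_ideal.
have [N maxN sxN] := exists_maximal_ideal (principal_ideal_is_ideal x) n1x.
rewrite inE; apply/forallP => M'; apply/implyP => /uniqM ->.
by rewrite -(uniqM _ maxN) (subsetP sxN) ?principal_ideal_id.
Qed.

Definition principal_local a : Prop :=
  a \isn't a GRing.unit /\ forall x, x \is a GRing.unit \/ x \in principal_ideal a.

Lemma unit_subgroup_expr (K : {set R}) k n :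
  is_unit_subgroup K -> k \in K -> k ^+ n \in K.
Proof.
case=> _ K1 KM _ kK; elim: n => [|n IH]; first by rewrite expr0.
by rewrite exprS; apply: KM.
Qed.

Lemma pure_principal_eq0 (K : {set R}) b :
  pure K -> (forall x, 1 + b * x \in K) -> b = 0.
Proof.
move=> pK bK; have bR0 : principal_ideal b = [set 0].
  apply: pK; first exact: principal_ideal_is_ideal.
  by apply/subsetP => _ /imsetP[_ /imsetP[x _ ->] ->].
by apply/set1P; rewrite -bR0 principal_ideal_id.
Qed.

Lemma char_odd_unit2 c : c%:R = 0 :> R -> odd c -> (2%:R : R) \is a GRing.unit.
Proof.
move=> c0 odd_c; apply/unitrPr; exists (- (c./2)%:R).
have ec : c%:R = 1 + 2%:R * (c./2)%:R :> R.
  by rewrite -{1}(odd_double_half c) odd_c -mul2n natrD natrM.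
by transitivity (1 - c%:R : R); [rewrite ec; ring | rewrite c0 subr0].
Qed.

End Ideals.

Lemma prime_odd_nonunit (R : finComUnitRingType) p : prime p ->
  (p%:R : R) \isn't a GRing.unit -> (2%:R : R) \is a GRing.unit -> odd p.
Proof. by move=> /even_prime[->|//] /negP. Qed.

Lemma galois_ring_principal_local (R : finComUnitRingType) :
  is_galois_ring R -> exists2 p, prime p & principal_local (p%:R : R).
Proof.
move=> [locR [p [prime_p p_rad radE]]]; exists p => //; split.
- have [M [maxM _]] := locR; have /and3P[iM n1M _] := maxM.
  apply: (ideal_proper_nonunit iM n1M).
  by move: p_rad; rewrite inE => /forallP/(_ M); rewrite maxM.
- move=> x; have [xu|xn] := boolP (x \is a GRing.unit); [by left | right].
  by rewrite /principal_ideal -radE local_nonunit_rad.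
Qed.

Section PrincipalLocal.
Variables (R : finComUnitRingType) (a : R).
Hypothesis aloc : principal_local a.

Lemma principal_local_proper_sub (J : {set R}) :
  is_ideal J -> 1 \notin J -> J \subset principal_ideal a.
Proof.
move=> iJ n1J; apply/subsetP => x xJ; have [_ /(_ x)[xu|//]] := aloc.
by move: (ideal_proper_nonunit iJ n1J xJ); rewrite xu.
Qed.

Lemma principal_local_maximal : is_maximal_ideal (principal_ideal a).
Proof.
have [an _] := aloc.
apply/and3P; split; rewrite ?principal_ideal_is_ideal ?one_in_principal_ideal //.
apply/forallP => J; apply/implyP => /and3P[iJ n1J sJ].
by rewrite eqEsubset sJ principal_local_proper_sub.
Qed.

Lemma principal_local_rad : Defs.rad R = principal_ideal a.
Proof.
have [an _] := aloc.
have uniqM M : is_maximal_ideal M -> M = principal_ideal a.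
  move=> /and3P[iM n1M /forallP/(_ (principal_ideal a))].
  rewrite principal_ideal_is_ideal one_in_principal_ideal an.
  by rewrite principal_local_proper_sub //= => /eqP.
apply/setP => x; rewrite inE; apply/forallP/idP => [/(_ (principal_ideal a))|xa M].
  by rewrite principal_local_maximal.
by apply/implyP => /uniqM ->.
Qed.

Lemma principal_local_I0 x :
  (x \in Defs.I0 R) = (x \in principal_ideal a) && (a * x == 0).
Proof.
rewrite inE principal_local_rad; apply: andb_id2l => /imsetP[y _ ->].
apply/forall_inP/eqP => [ax0 | ax0 _ /imsetP[z _ ->]].
  by apply/eqP; rewrite mulrC ax0 ?principal_ideal_id.
by rewrite mulrCA mulrA ax0 mul0r.
Qed.

Lemma unit_1_sub_expr d : (0 < d)%N -> 1 - a ^+ d \is a GRing.unit.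
Proof.
case: d => // d _; have [an /(_ (1 - a ^+ d.+1))[//|/imsetP[y _ ey]]] := aloc.
case/negP: an; apply/unitrPr; exists (y + a ^+ d).
by rewrite mulrDr -exprS -ey subrK.
Qed.

Lemma principal_local_nilpotent : exists n, a ^+ n = 0.
Proof.
have /injectivePn[i [j neq_ij /= eq_ij]] :
    ~~ injectiveb (fun i : 'I_#|R|.+1 => a ^+ i).
  by apply/injectiveP => /leq_card; rewrite card_ord ltnn.
wlog lt_ij : i j neq_ij eq_ij / (i < j)%N.
  move=> W; case: (ltngtP i j) => [|lt_ji|eq_ij']; first exact: W.
  - by apply: (W j i); rewrite // eq_sym.
  - by move: neq_ij; rewrite -val_eqE /= eq_ij' eqxx.
exists i; apply: (mulIr (@unit_1_sub_expr (j - i) _)); first by rewrite subn_gt0.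
by rewrite mul0r mulrBr mulr1 -exprD subnKC ?(ltnW lt_ij) // eq_ij subrr.
Qed.

Lemma principal_local_nil_index :
  a != 0 -> exists M, a ^+ M.+2 = 0 /\ a ^+ M.+1 != 0.
Proof.
move=> anz; have [n an0] := principal_local_nilpotent.
have exn : exists n, a ^+ n == 0 by exists n; apply/eqP.
case: (ex_minnP exn) => -[|[|M]] /eqP aN minN.
- by move: aN; rewrite expr0 => /eqP; rewrite oner_eq0.
- by move: aN; rewrite expr1 => /eqP; rewrite (negbTE anz).
- by exists M; split => //; apply/negP => /minN; rewrite ltnn.
Qed.

Lemma unit_expr_decomp m x :
  (exists k u, [/\ (k < m)%N, u \is a GRing.unit & x = a ^+ k * u]) \/
  exists y, x = a ^+ m * y.
Proof.
have [_ au] := aloc.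
elim: m x => [|m IH] x; first by right; exists x; rewrite expr0 mul1r.
have [[k [u [km uu ->]]]|[y ->]] := IH x.
  by left; exists k, u; split => //; apply: ltnW.
have [yu|/imsetP[z _ ->]] := au y; first by left; exists m, y.
by right; exists z; rewrite exprSr mulrA.
Qed.

End PrincipalLocal.

Lemma unit_subgroup_image (R S : finComUnitRingType) (f : {rmorphism R -> S})
    (K : {set R}) :
  is_unit_subgroup K -> is_unit_subgroup (f @: K).
Proof.
case=> /subsetP sKu K1 KM KV; split.
- apply/subsetP => _ /imsetP[k kK ->]; rewrite inE rmorph_unit //.
  by have := sKu k kK; rewrite inE.
- by apply/imsetP; exists 1; rewrite ?rmorph1.
- move=> _ _ /imsetP[x xK ->] /imsetP[y yK ->].
  by rewrite -rmorphM imset_f ?KM.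
- move=> _ /imsetP[x xK ->]; have := sKu x xK; rewrite inE => xu.
  by rewrite -rmorphV // imset_f ?KV.
Qed.

Lemma expr1Dn_nil3 (R : comPzRingType) (b : R) m : b ^+ 3 = 0 ->
  (1 + b) ^+ m = 1 + m%:R * b + 'C(m, 2)%:R * b ^+ 2.
Proof.
move=> b3; elim: m => [|m IH]; first by rewrite expr0 mul0r bin0n mul0r !addr0.
rewrite exprSr IH binS bin1 natrD mulrSr.
by transitivity (1 + (m%:R + 1) * b + ('C(m, 2)%:R + m%:R) * b ^+ 2
  + 'C(m, 2)%:R * b ^+ 3); [ring | rewrite b3 mulr0 addr0].
Qed.

Lemma expr_odd_1D (R : comPzRingType) n (c : R) : odd n -> n%:R ^+ 3 * c = 0 ->
  (1 + n%:R * c) ^+ n = 1 + n%:R ^+ 2 * c.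
Proof.
move=> odd_n n3c.
have cube0 : (n%:R * c) ^+ 3 = 0.
  by transitivity (n%:R ^+ 3 * c * c ^+ 2); [ring | rewrite n3c mul0r].
rewrite expr1Dn_nil3 // bin2odd // natrM.
by transitivity (1 + n%:R ^+ 2 * c + (n.-1./2)%:R * c * (n%:R ^+ 3 * c));
  [ring | rewrite n3c mulr0 addr0].
Qed.

Section Quotient.
Variables (R S : finComUnitRingType) (pi0 : {rmorphism R -> S}) (a : R).
Hypothesis aloc : principal_local a.
Hypothesis pi0_surj : forall s : S, exists r : R, pi0 r = s.
Hypothesis pi0_ker : forall r : R, pi0 r = 0 <-> r \in Defs.I0 R.

Lemma pi0_eq0 r : pi0 r = 0 <-> exists2 e, r = a * e & a ^+ 2 * e = 0.
Proof.
rewrite pi0_ker (principal_local_I0 aloc).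
split => [/andP[/imsetP[e _ ->] /eqP aae]|[e -> aae]].
  by exists e; rewrite // expr2 -mulrA.
by rewrite imset_f //= mulrA -expr2 aae.
Qed.

Lemma principal_local_image : principal_local (pi0 a).
Proof.
have [an au] := aloc; split.
- apply: contra an => /unitrPr[y ay1]; have [r er] := pi0_surj y.
  have /pi0_eq0[z ez _] : pi0 (a * r - 1) = 0.
    by rewrite rmorphB rmorphM rmorph1 er ay1 subrr.
  by apply/unitrPr; exists (r - z); rewrite mulrBr -ez opprB addrC subrK.
- move=> x; have [r <-] := pi0_surj x.
  have [ru|/imsetP[y _ ->]] := au r; first by left; apply: rmorph_unit.
  by right; rewrite rmorphM imset_f.
Qed.

Lemma card_image_lt : a != 0 -> (#|S| < #|R|)%N.
Proof.
move=> anz; have [M [aM2 aM1]] := principal_local_nil_index aloc anz.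
have kerM : pi0 (a ^+ M.+1) = 0.
  by apply/pi0_eq0; exists (a ^+ M); rewrite -?exprS // -exprD.
have imT : pi0 @: [set: R] = [set: S].
  by apply/setP => s; have [r <-] := pi0_surj s; rewrite !inE imset_f ?inE.
rewrite -cardsT -imT -[#|R|]cardsT ltn_neqAle leq_imset_card andbT.
apply: contra aM1 => /imset_injP inj; apply/eqP.
by apply: inj; rewrite ?inE // kerM rmorph0.
Qed.

Lemma image_ideal_socle (J : {set S}) M r : is_ideal J -> a ^+ M.+2 = 0 ->
  pi0 r \in J -> pi0 r != 0 -> forall x, pi0 (a ^+ M * x) \in J.
Proof.
move=> /idealP[_ _ JM] aM2 rJ rnz x.
have [[k [u [ltkM uu er]]]|[y ery]] := unit_expr_decomp aloc M.+1 r; last first.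
  case/eqP: rnz; apply/pi0_eq0; exists (a ^+ M * y); first by rewrite ery exprS mulrA.
  by rewrite mulrA -exprD aM2 mul0r.
have -> : a ^+ M * x = a ^+ (M - k) * u^-1 * x * r.
  rewrite er; transitivity (a ^+ (M - k) * a ^+ k * x * (u^-1 * u)); last by ring.
  by rewrite mulVr // mulr1 -exprD subnK.
by rewrite rmorphM JM.
Qed.

End Quotient.

Section PureImage.
Variables (R S : finComUnitRingType) (pi0 : {rmorphism R -> S}) (p : nat).
Hypothesis odd_p : odd p.
Hypothesis ploc : principal_local (p%:R : R).
Hypothesis pi0_surj : forall s : S, exists r : R, pi0 r = s.
Hypothesis pi0_ker : forall r : R, pi0 r = 0 <-> r \in Defs.I0 R.
Local Notation a := (p%:R : R).

Lemma lift_one_add_image (K : {set R}) M x :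
  is_unit_subgroup K -> a ^+ M.+3 = 0 ->
  1 + pi0 (a ^+ M.+1 * x) \in pi0 @: K -> 1 + a ^+ M.+2 * x \in K.
Proof.
move=> uK aM3 /imsetP[k kK ek].
have /(pi0_eq0 ploc pi0_ker)[e ee aae] : pi0 (k - 1 - a ^+ M.+1 * x) = 0.
  by rewrite !rmorphB rmorph1 -ek; ring.
have -> : 1 + a ^+ M.+2 * x = 1 + a ^+ 2 * (a ^+ M * x + e).
  by rewrite mulrDr aae addr0 mulrA -exprD.
rewrite -expr_odd_1D //; last first.
  by rewrite mulrDr mulrA -exprD aM3 mul0r exprS -mulrA aae mulr0 addr0.
suff -> : 1 + a * (a ^+ M * x + e) = k by apply: unit_subgroup_expr.
by rewrite mulrDr mulrA -exprS -ee; ring.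
Qed.

Lemma pure_image (K : {set R}) :
  a != 0 -> is_unit_subgroup K -> pure K -> pure (pi0 @: K).
Proof.
move=> anz uK pK J iJ sJ.
apply/setP => j; rewrite inE; apply/idP/eqP => [jJ|->]; last by case/idealP: iJ.
have [//|jnz] := eqVneq j 0; exfalso.
have [r er] := pi0_surj j; rewrite -er in jJ jnz.
have [M [aM2 aM1]] := principal_local_nil_index ploc anz.
have one_add y : 1 + pi0 (a ^+ M * y) \in pi0 @: K.
  apply: (subsetP sJ); rewrite imset_f //.
  exact: (image_ideal_socle ploc pi0_ker iJ aM2 jJ jnz).
case: M aM2 aM1 one_add => [|M] aM2 aM1 one_add.
  have [/subsetP sKu _ _ _] := unit_subgroup_image pi0 uK.
  have := sKu _ (one_add (-1)).
  by rewrite expr0 mul1r rmorphN rmorph1 subrr inE unitr0.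
case/eqP: aM1; apply: (pure_principal_eq0 pK) => y.
exact: lift_one_add_image.
Qed.

End PureImage.

Lemma strongly_pure_principal_local n (R : finComUnitRingType) p (K : {set R}) :
  (#|R| < n)%N -> odd p -> principal_local (p%:R : R) ->
  is_unit_subgroup K -> pure K -> strongly_pure K.
Proof.
elim: n R K => [//|n IH] R K ltRn odd_p ploc uK pK.
apply: StronglyPure => //.
have [p0|pnz] := eqVneq (p%:R : R) 0.
  left => x xnz; have [_ /(_ x)[//|/imsetP[y _ exy]]] := ploc.
  by move: xnz; rewrite exy p0 mul0r eqxx.
right => S pi0 surj ker; apply: IH => //.
- by rewrite -ltnS (leq_trans _ ltRn) // ltnS (card_image_lt ploc surj ker).
- by rewrite -(rmorph_nat pi0); apply: (principal_local_image ploc surj ker).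
- exact: unit_subgroup_image.
- exact: (pure_image odd_p ploc surj ker).
Qed.

Theorem theorem6p6 (R : finComUnitRingType) (c : nat) (K : {set R}) :
  is_galois_ring R -> has_char R c -> odd c ->
  is_unit_subgroup K -> pure K -> strongly_pure K.
Proof.
move=> galR [_ c0 _] odd_c uK pK.
have [p prime_p ploc] := galois_ring_principal_local galR.
have odd_p : odd p.
  exact: (prime_odd_nonunit prime_p ploc.1 (char_odd_unit2 c0 odd_c)).
exact: (strongly_pure_principal_local (ltnSn #|R|) odd_p ploc uK pK).
Qed.
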